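(* Every $\alpha$-pairing can be transformed by the moves $M_1,M_2$ into a primitive $\alpha$-pairing. Two homologous primitive $\alpha$-pairings are isomorphic.
   Context: Fix a set $\alpha$ with an involution $\tau$, and let $\pi$ be the multiplicative abelian group generated by the elements of $\alpha$ with relations $a\,\tau(a)=1$. A pairing $b:S\times S\to\pi$ is skew-symmetric if $b(A,B)=b(B,A)^{-1}$ and $b(A,A)=1$ for all $A,B$. An $\alpha$-pairing is a triple $(S,s,b)$: a set $S$ with a distinguished element $s\in S$, a map $S\setminus\{s\}\to\alpha$, $A\mapsto|A|$, and a skew-symmetric pairing $b:S\times S\to\pi$. Two $\alpha$-pairings $(S,s,b),(S',s',b')$ are isomorphic if there is a bijection $S\to S'$ sending $s$ to $s'$, preserving $|\cdot|$ on $S\setminus\{s\}$, and carrying $b$ to $b'$. An element $A\in S\setminus\{s\}$ is annihilating if $b(A,C)=1$ for all $C\in S$. Elements $A,B\in S\setminus\{s\}$ are twins if $|A|=\tau(|B|)$ and $b(A,C)=b(B,C)$ for all $C\in S$. Move $M_1$ deletes an annihilating element $A$, replacing $(S,s,b)$ by $(S\setminus\{A\},s,b|)$; move $M_2$ deletes a pair of twins $A,B$, replacing $(S,s,b)$ by $(S\setminus\{A,B\},s,b|)$. Two $\alpha$-pairings are homologous if they are related by a finite sequence of moves $M_1,M_2$, their inverses, and isomorphisms. An $\alpha$-pairing is primitive if it has no annihilating elements and no pairs of twins. *)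

From HB Require Import structures.
From mathcomp Require Import all_boot.

Set Implicit Arguments.
Unset Strict Implicit.
Unset Printing Implicit Defensive.

Section AlphaPairings.

Variables (alpha : Type) (tau : alpha -> alpha).

(* The group pi: the abelian group generated by the elements of alpha *)
(* with relations a * tau(a) = 1, given by a monoid presentation.     *)
(* An element is represented by a word in the generators a^{+-1}:     *)
(* (a, true) stands for a, (a, false) for a^{-1}.  Equality in pi is  *)
Definition piword := seq (alpha * bool).
Definition pone : piword := [::].
Definition pmul (u v : piword) : piword := u ++ v.
Definition pinv (u : piword) : piword := rev (map (fun x => (x.1, ~~ x.2)) u).

Inductive pi_eq : piword -> piword -> Prop :=
  | pi_refl u : pi_eq u u
  | pi_sym u v : pi_eq u v -> pi_eq v u
  | pi_trans u v w : pi_eq u v -> pi_eq v w -> pi_eq u w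
  | pi_cat u1 u2 v1 v2 : pi_eq u1 u2 -> pi_eq v1 v2 -> pi_eq (pmul u1 v1) (pmul u2 v2)
  | pi_comm x y : pi_eq [:: x; y] [:: y; x]
  | pi_inv a : pi_eq [:: (a, true); (a, false)] pone
  | pi_rel a : pi_eq [:: (a, true); (tau a, true)] pone.

(* alpha-pairings.  The set S with distinguished element s is         *)
(* represented as option T with s = None; thus S \ {s} = T.            *)
Record apairing := APairing {
  carrier : finType;
  lab : carrier -> alpha;
  pb : option carrier -> option carrier -> piword;
  pb_skew : forall x y, pi_eq (pb x y) (pinv (pb y x));
  pb_diag : forall x, pi_eq (pb x x) pone
}.
Arguments lab : clear implicits.
Arguments pb : clear implicits.

(* Isomorphism: bijection S -> S' sending s to s' (= option lift of a *)
(* bijection T -> T'), preserving |.| and carrying b to b'.           *)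
Definition apiso (P Q : apairing) : Prop :=
  exists f : carrier P -> carrier Q,
    [/\ bijective f,
        forall x, lab Q (f x) = lab P x &
        forall x y, pi_eq (pb Q (omap f x) (omap f y)) (pb P x y)].

Definition annihilating (P : apairing) (A : carrier P) : Prop :=
  forall C, pi_eq (pb P (Some A) C) pone.

Definition twins (P : apairing) (A B : carrier P) : Prop :=
  [/\ A <> B, lab P A = tau (lab P B) &
      forall C, pi_eq (pb P (Some A) C) (pb P (Some B) C)].

Arguments annihilating : clear implicits.
Arguments twins : clear implicits.

Definition primitive (P : apairing) : Prop :=
  (forall A, ~ annihilating P A) /\ (forall A B, ~ twins P A B).

Definition restrict (P : apairing) (keep : pred (carrier P)) : apairing.
Proof.
refine (@APairing {x : carrier P | keep x} (fun x => lab P (val x))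
          (fun x y => pb P (omap val x) (omap val y)) _ _).
- by move=> x y; apply: pb_skew.
- by move=> x; apply: pb_diag.
Defined.

Inductive move (P : apairing) : apairing -> Prop :=
  | move_M1 (A : carrier P) :
      annihilating P A -> move P (restrict (predC1 A))
  | move_M2 (A B : carrier P) :
      twins P A B -> move P (restrict [pred x | (x != A) && (x != B)]).

Inductive reduces : apairing -> apairing -> Prop :=
  | red_refl P : reduces P P
  | red_step P Q R : move P Q -> reduces Q R -> reduces P R.

Inductive homologous : apairing -> apairing -> Prop :=
  | hom_iso P Q : apiso P Q -> homologous P Q
  | hom_move P Q : move P Q -> homologous P Q
  | hom_sym P Q : homologous P Q -> homologous Q P
  | hom_trans P Q R : homologous P Q -> homologous Q R -> homologous P R.

End AlphaPairings.

From HB Require Import structures.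
From mathcomp Require Import all_boot perm.
From Stdlib Require Import Relation_Operators Classical.

Set Implicit Arguments.
Unset Strict Implicit.
Unset Printing Implicit Defensive.

(* Every move deletes elements, so reduction terminates, and moves are transported along
   isomorphisms.  Moves are locally confluent up to isomorphism: moves deleting disjoint
   sets commute; an element twin to an annihilating element is annihilating; and two twins
   of the same element have the same label and the same row (hence, by skew-symmetry, the
   same column), so exchanging them is an automorphism.  Newman's lemma modulo isomorphism
   then makes the primitive reduct unique up to isomorphism, and this uniqueness propagates
   along the moves and isomorphisms that generate homology. *)

#[local] Arguments rt1n_refl {A R x}.
#[local] Arguments rt1n_trans {A R x y z}.

Section ReductionModuloEquivalence.

Variables (T : Type) (step equiv : T -> T -> Prop).
Hypothesis equiv_refl : forall x, equiv x x.
Hypothesis equiv_sym : forall x y, equiv x y -> equiv y x.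
Hypothesis equiv_trans : forall x y z, equiv x y -> equiv y z -> equiv x z.
Hypothesis step_equiv :
  forall x x' y, equiv x x' -> step x y -> exists2 y', step x' y' & equiv y y'.

Local Notation star := (clos_refl_trans_1n T step).

Definition normal x := forall y, ~ step x y.

Definition joinable y1 y2 :=
  exists z1 z2, [/\ star y1 z1, star y2 z2 & equiv z1 z2].

Lemma star_trans x y z : star x y -> star y z -> star x z.
Proof.
elim=> // {}x x' y' sxx' _ IH /IH; exact: rt1n_trans sxx'.
Qed.

Lemma star_equiv x x' y : equiv x x' -> star x y -> exists2 y', star x' y' & equiv y y'.
Proof.
move=> exx' sxy; elim: sxy x' exx' => [{}x x' exx' | {}x {}y z sxy _ IH x' exx'].
  by exists x'; first exact: rt1n_refl.
have [y' sx'y' eyy'] := step_equiv exx' sxy.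
have [z' sy'z' ezz'] := IH y' eyy'.
by exists z'; first exact: rt1n_trans sx'y' sy'z'.
Qed.

Lemma normal_equiv x x' : equiv x x' -> normal x -> normal x'.
Proof. by move=> /equiv_sym ex'x nx y /(step_equiv ex'x) [z /nx]. Qed.

Lemma joinable_sym y1 y2 : joinable y1 y2 -> joinable y2 y1.
Proof. by case=> z1 [z2 [s1 s2 e12]]; exists z2, z1; split; last exact: equiv_sym. Qed.

Variable weight : T -> nat.
Hypothesis step_weight : forall x y, step x y -> weight y < weight x.

Lemma normal_exists x : exists2 n, star x n & normal n.
Proof.
have [m] := ubnP (weight x); elim: m x => // m IH x /ltnSE le_xm.
case: (classic (exists y, step x y)) => [[y sxy] | nx]; last first.
  by exists x => [|y sxy]; [exact: rt1n_refl | apply: nx; exists y].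
have [n syn nn] := IH y (leq_trans (step_weight sxy) le_xm).
by exists n; first exact: rt1n_trans sxy syn.
Qed.

Hypothesis step_confluent :
  forall x y1 y2, step x y1 -> step x y2 -> joinable y1 y2.

Lemma normal_unique x n1 n2 :
  star x n1 -> normal n1 -> star x n2 -> normal n2 -> equiv n1 n2.
Proof.
have [m] := ubnP (weight x); elim: m x n1 n2 => // m IH x n1 n2 /ltnSE le_xm.
case=> [|y1 {}n1 sxy1 sy1n1] nn1 [|y2 {}n2 sxy2 sy2n2] nn2.
- exact: equiv_refl.
- by case: (nn1 _ sxy2).
- by case: (nn2 _ sxy1).
have [z1 [z2 [sy1z1 sy2z2 ez1z2]]] := step_confluent sxy1 sxy2.
have [u sz1u nu] := normal_exists z1.
have [u' sz2u' euu'] := star_equiv ez1z2 sz1u.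
have le_y1m := leq_trans (step_weight sxy1) le_xm.
have le_y2m := leq_trans (step_weight sxy2) le_xm.
have en1u := IH y1 n1 u le_y1m sy1n1 nn1 (star_trans sy1z1 sz1u) nu.
have eu'n2 := IH y2 u' n2 le_y2m (star_trans sy2z2 sz2u') (normal_equiv euu' nu) sy2n2 nn2.
exact: equiv_trans (equiv_trans en1u euu') eu'n2.
Qed.

Lemma normal_unique_closure x y nx ny :
  clos_refl_sym_trans T (union T equiv step) x y ->
  star x nx -> normal nx -> star y ny -> normal ny -> equiv nx ny.
Proof.
move=> xy; elim: xy nx ny => {x y} [x y [exy | sxy] | x | x y _ IH | x y z _ IH1 _ IH2]
    nx ny sxnx nnx syny nny.
- have [nx' synx' enxnx'] := star_equiv exy sxnx.
  exact: equiv_trans enxnx' (normal_unique synx' (normal_equiv enxnx' nnx) syny nny).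
- exact: normal_unique sxnx nnx (rt1n_trans sxy syny) nny.
- exact: normal_unique sxnx nnx syny nny.
- exact: equiv_sym (IH _ _ syny nny sxnx nnx).
- have [ny' syny' nny'] := normal_exists y.
  exact: equiv_trans (IH1 _ _ sxnx nnx syny' nny') (IH2 _ _ syny' nny' _ nny).
Qed.

End ReductionModuloEquivalence.

Section AlphaPairings.

Variables (alpha : Type) (tau : alpha -> alpha).
Hypothesis tauK : involutive tau.

Local Notation pe := (pi_eq tau).
Local Notation AP := (apairing tau).
Local Notation ap_joinable := (joinable (@move alpha tau) (@apiso alpha tau)).

Lemma pinv_cat (u v : piword alpha) : pinv (u ++ v) = pinv v ++ pinv u.
Proof. by rewrite /pinv map_cat rev_cat. Qed.

Lemma pi_rel_inv a : pe [:: (tau a, false); (a, false)] (pone alpha).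
Proof.
(* (tau a)^-1 a^-1 = (tau a)^-1 a^-1 a (tau a) = (tau a)^-1 (tau a) = 1 *)
have inv_a : pe [:: (a, false); (a, true)] (pone alpha).
  exact: pi_trans (pi_comm tau _ _) (pi_inv tau a).
apply: pi_trans (pi_cat (pi_refl tau [:: (tau a, false); (a, false)])
                        (pi_sym (pi_rel tau a))) _.
apply: pi_trans (pi_cat (pi_refl tau [:: (tau a, false)])
                        (pi_cat inv_a (pi_refl tau [:: (tau a, true)]))) _.
exact: pi_trans (pi_comm tau _ _) (pi_inv tau (tau a)).
Qed.

Lemma pi_eq_pinv u v : pe u v -> pe (pinv u) (pinv v).
Proof.
elim=> {u v} [u | u v _ IH | u v w _ IH1 _ IH2 | u1 u2 v1 v2 _ IH1 _ IH2 | x y | a | a].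
- exact: pi_refl.
- exact: pi_sym.
- exact: pi_trans IH1 IH2.
- by rewrite /pmul !pinv_cat; apply: pi_cat.
- exact: pi_comm.
- exact: pi_inv.
- exact: pi_rel_inv.
Qed.

Lemma pb_col_of_row (P : AP) (A B : carrier P) :
  (forall C, pe (pb (Some A) C) (pb (Some B) C)) ->
  forall C, pe (pb C (Some A)) (pb C (Some B)).
Proof.
move=> rowAB C; apply: pi_trans (pb_skew _ _) _.
exact: pi_trans (pi_eq_pinv (rowAB C)) (pi_sym (pb_skew _ _)).
Qed.

Definition embedding (Q P : AP) (h : carrier Q -> carrier P) :=
  [/\ injective h, forall x, lab (h x) = lab x &
      forall x y, pe (pb (omap h x) (omap h y)) (pb x y)].

Lemma embedding_comp (Q P R : AP) (h : carrier Q -> carrier P) (g : carrier P -> carrier R) :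
  embedding h -> embedding g -> embedding (g \o h).
Proof.
case=> h_inj labh pbh [g_inj labg pbg]; split=> [|x|x y]; first exact: inj_comp.
  by rewrite /= labg labh.
rewrite !(omap_comp h g); exact: pi_trans (pbg _ _) (pbh x y).
Qed.

Lemma embedding_compr (Q P R : AP) (h : carrier Q -> carrier P) (g : carrier P -> carrier R) :
  embedding g -> embedding (g \o h) -> embedding h.
Proof.
case=> _ labg pbg [gh_inj labgh pbgh]; split=> [|x|x y]; first exact: inj_compr gh_inj.
  by rewrite -labg labgh.
have := pbgh x y; rewrite !(omap_comp h g); exact: pi_trans (pi_sym (pbg _ _)).
Qed.

Lemma embedding_can (P Q : AP) (f : carrier P -> carrier Q) g :
  embedding f -> cancel g f -> embedding g.
Proof.
case=> _ labf pbf gK; split=> [|y|x y]; first exact: can_inj gK.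
  by rewrite -labf gK.
by apply: pi_trans (pi_sym (pbf _ _)) _; rewrite !(omapK gK); exact: pi_refl.
Qed.

Lemma embedding_val (P : AP) (k : pred (carrier P)) :
  embedding (val : carrier (restrict k) -> carrier P).
Proof. by split=> // [|x y]; [exact: val_inj | exact: pi_refl]. Qed.

Lemma apisoP (P Q : AP) :
  apiso P Q <-> exists f : carrier P -> carrier Q, embedding f /\ bijective f.
Proof.
split=> [[f [bij_f labf pbf]] | [f [[_ labf pbf] bij_f]]]; exists f; split=> //.
by split=> //; exact: bij_inj.
Qed.

Lemma apiso_refl (P : AP) : apiso P P.
Proof.
exists id; split=> // [|x y]; first by exists id.
by rewrite !omap_id; exact: pi_refl.
Qed.

Lemma apiso_sym (P Q : AP) : apiso P Q -> apiso Q P.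
Proof.
case/apisoP=> f [emb_f [g fK gK]]; apply/apisoP; exists g.
by split; [exact: embedding_can emb_f gK | exists f].
Qed.

Lemma apiso_trans (P Q R : AP) : apiso P Q -> apiso Q R -> apiso P R.
Proof.
case/apisoP=> f [emb_f bij_f] /apisoP[g [emb_g bij_g]]; apply/apisoP.
by exists (g \o f); split; [exact: embedding_comp | exact: bij_comp].
Qed.

Lemma embedding_restrict_apiso (Q P : AP) (h : carrier Q -> carrier P) (k : pred (carrier P)) :
  embedding h -> (forall x, (x \in codom h) = k x) -> apiso Q (restrict k).
Proof.
move=> emb_h codom_h.
have k_h q : k (h q) by rewrite -codom_h codom_f.
have codom_k (r : carrier (restrict k)) : val r \in codom h by rewrite codom_h; exact: valP.
pose f q : carrier (restrict k) := Sub (h q) (k_h q).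
apply/apisoP; exists f; split.
  exact: (embedding_compr (h := f) (embedding_val k) emb_h).
case: emb_h => h_inj _ _; exists (fun r => iinv (codom_k r)) => [q | r].
  by apply: h_inj; rewrite f_iinv.
by apply: val_inj; rewrite /= f_iinv.
Qed.

Lemma restrict_eq (P : AP) (k k' : pred (carrier P)) :
  k =1 k' -> apiso (restrict k) (restrict k').
Proof.
by move=> kk'; apply: embedding_restrict_apiso (embedding_val k) _ => x; rewrite codom_val.
Qed.

Lemma restrict_restrict (P : AP) (k : pred (carrier P)) (k2 : pred (carrier (restrict k)))
    (k' : pred (carrier P)) :
  (forall q, k2 q = k' (val q)) -> apiso (restrict k2) (restrict [pred x | k x && k' x]).
Proof.
move=> k2E.
apply: embedding_restrict_apiso (embedding_comp (embedding_val _) (embedding_val _)) _ => x.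
apply/codomP/andP => [[q ->] | [kx k'x]].
  by split; [exact: valP | rewrite -k2E; exact: valP].
have k2x : k2 (Sub x kx) by rewrite k2E.
by exists (Sub (Sub x kx) k2x).
Qed.

Lemma apiso_restrict (P P' : AP) (f : carrier P -> carrier P') (k : pred (carrier P))
    (k' : pred (carrier P')) :
  embedding f -> bijective f -> (forall x, k' (f x) = k x) ->
  apiso (restrict k) (restrict k').
Proof.
move=> emb_f [g fK gK] kf.
apply: embedding_restrict_apiso (embedding_comp (embedding_val k) emb_f) _ => x.
apply/codomP/idP => [[q ->] | k'x]; first by rewrite /= kf; exact: valP.
have kgx : k (g x) by rewrite -kf gK.
by exists (Sub (g x) kgx); rewrite /= gK.
Qed.

Lemma embedding_annihilating (Q P : AP) (h : carrier Q -> carrier P) A :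
  embedding h -> annihilating (h A) -> annihilating A.
Proof. by case=> _ _ pbh annA C; exact: pi_trans (pi_sym (pbh (Some A) C)) (annA _). Qed.

Lemma embedding_twins (Q P : AP) (h : carrier Q -> carrier P) A B :
  embedding h -> twins (h A) (h B) -> twins A B.
Proof.
case=> _ labh pbh [neqAB labAB rowAB]; split=> [eqAB | | C].
- by apply: neqAB; rewrite eqAB.
- by rewrite -!labh.
- exact: pi_trans (pi_sym (pbh (Some A) C)) (pi_trans (rowAB _) (pbh (Some B) C)).
Qed.

Lemma twins_sym (P : AP) (A B : carrier P) : twins A B -> twins B A.
Proof.
case=> neqAB labAB rowAB; split=> [eqBA | | C]; first exact: neqAB.
  by rewrite labAB tauK.
exact: pi_sym.
Qed.

Lemma annihilating_twin (P : AP) (A B : carrier P) :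
  annihilating A -> twins A B -> annihilating B.
Proof. by move=> annA [_ _ rowAB] C; exact: pi_trans (pi_sym (rowAB C)) (annA C). Qed.

Lemma move_apiso (P P' Q : AP) :
  apiso P P' -> move P Q -> exists2 Q', move P' Q' & apiso Q Q'.
Proof.
case/apisoP=> f [emb_f [g fK gK]]; have emb_g := embedding_can emb_f gK.
have bij_f : bijective f by exists g.
case=> [A annA | A B twAB].
- exists (restrict (predC1 (f A))).
    by apply: move_M1; apply: (embedding_annihilating emb_g); rewrite fK.
  by apply: (apiso_restrict emb_f bij_f) => x; rewrite /= (bij_eq bij_f).
- exists (restrict [pred x | (x != f A) && (x != f B)]).
    by apply: move_M2; apply: (embedding_twins emb_g); rewrite !fK.
  by apply: (apiso_restrict emb_f bij_f) => x; rewrite /= !(bij_eq bij_f).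
Qed.

Lemma card_restrict (P : AP) (k : pred (carrier P)) A :
  ~~ k A -> #|carrier (restrict k)| < #|carrier P|.
Proof.
move=> kA; rewrite card_sig -(cardC k) -addn1 leq_add2l.
by apply/card_gt0P; exists A.
Qed.

Lemma card_move (P Q : AP) : move P Q -> #|carrier Q| < #|carrier P|.
Proof. by case=> [A _ | A B _]; apply: (card_restrict (A := A)); rewrite /= eqxx. Qed.

Lemma annihilating_restrict_move (P : AP) (k : pred (carrier P)) A :
  k A -> annihilating A ->
  exists2 T, move (restrict k) T & apiso T (restrict [pred x | k x && (x != A)]).
Proof.
move=> kA annA; exists (restrict (predC1 (Sub A kA : carrier (restrict k)))).
  exact/move_M1/(embedding_annihilating (embedding_val k)).
by apply: restrict_restrict => q; rewrite /= -val_eqE.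
Qed.

Lemma twins_restrict_move (P : AP) (k : pred (carrier P)) A B :
  k A -> k B -> twins A B ->
  exists2 T, move (restrict k) T &
    apiso T (restrict [pred x | k x && ((x != A) && (x != B))]).
Proof.
move=> kA kB twAB.
pose a : carrier (restrict k) := Sub A kA; pose b : carrier (restrict k) := Sub B kB.
exists (restrict [pred x | (x != a) && (x != b)]).
  exact/move_M2/(embedding_twins (embedding_val k)).
by apply: restrict_restrict => q; rewrite /= -!val_eqE.
Qed.

Lemma tperm_embedding (P : AP) (B D : carrier P) :
  lab B = lab D -> (forall C, pe (pb (Some B) C) (pb (Some D) C)) ->
  embedding (tperm B D).
Proof.
move=> labBD rowBD; have colBD := pb_col_of_row rowBD.
have row x C : pe (pb (omap (tperm B D) x) C) (pb x C).
  case: x => [x|] /=; last exact: pi_refl.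
  by case: tpermP => [->|->|_ _]; [exact: pi_sym | | exact: pi_refl].
have col C x : pe (pb C (omap (tperm B D) x)) (pb C x).
  case: x => [x|] /=; last exact: pi_refl.
  by case: tpermP => [->|->|_ _]; [exact: pi_sym | | exact: pi_refl].
split=> [|x|x y]; first exact: perm_inj.
  by case: tpermP => [->|->|_ _].
exact: pi_trans (row _ _) (col _ _).
Qed.

Lemma twins_apiso (P : AP) (A B D : carrier P) :
  twins A B -> twins A D ->
  apiso (restrict [pred x | (x != A) && (x != B)])
        (restrict [pred x | (x != A) && (x != D)]).
Proof.
case=> neqAB labAB rowAB [neqAD labAD rowAD].
have labBD : lab B = lab D by apply: (inv_inj tauK); rewrite -labAB -labAD.
have rowBD C := pi_trans (pi_sym (rowAB C)) (rowAD C).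
have fixA : tperm B D A = A.
  by apply: tpermD; apply/eqP => eqA; [apply: neqAB | apply: neqAD].
apply: apiso_restrict (tperm_embedding labBD rowBD) _ _ => [|x].
  by exists (tperm B D); exact: tpermK.
by rewrite /= -{1}fixA (inj_eq perm_inj) -{2}(tpermL B D) (inj_eq perm_inj).
Qed.

Lemma twins_overlap_apiso (P : AP) (A B C D : carrier P) :
  twins A B -> twins C D -> [|| A == C, A == D, B == C | B == D] ->
  apiso (restrict [pred x | (x != A) && (x != B)])
        (restrict [pred x | (x != C) && (x != D)]).
Proof.
have swap (X Y : carrier P) : apiso (restrict [pred x | (x != X) && (x != Y)])
                                     (restrict [pred x | (x != Y) && (x != X)]).
  by apply: restrict_eq => x; exact: andbC.
move=> twAB twCD; case/or4P=> /eqP eq_pair; subst.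
- exact: twins_apiso.
- exact: apiso_trans (twins_apiso twAB (twins_sym twCD)) (swap _ _).
- exact: apiso_trans (swap _ _) (twins_apiso (twins_sym twAB) twCD).
- apply: apiso_trans (swap _ _) (apiso_trans _ (swap _ _)).
  exact: twins_apiso (twins_sym twAB) (twins_sym twCD).
Qed.

Lemma joinable_apiso (Q1 Q2 : AP) : apiso Q1 Q2 -> ap_joinable Q1 Q2.
Proof. by exists Q1, Q2; split=> //; exact: rt1n_refl. Qed.

Lemma joinable_move_apiso (Q1 Q2 T : AP) :
  move Q1 T -> apiso T Q2 -> ap_joinable Q1 Q2.
Proof.
by exists T, Q2; split=> //; [exact: rt1n_trans rt1n_refl | exact: rt1n_refl].
Qed.

Lemma joinable_restrict (P : AP) (k1 k2 : pred (carrier P)) :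
  (exists2 T1, move (restrict k1) T1 & apiso T1 (restrict [pred x | k1 x && k2 x])) ->
  (exists2 T2, move (restrict k2) T2 & apiso T2 (restrict [pred x | k2 x && k1 x])) ->
  ap_joinable (restrict k1) (restrict k2).
Proof.
case=> T1 m1 iso1 [T2 m2 iso2]; exists T1, T2; split; try exact: rt1n_trans rt1n_refl.
apply: apiso_trans iso1 (apiso_trans _ (apiso_sym iso2)).
by apply: restrict_eq => x; exact: andbC.
Qed.

Lemma joinable_M1M1 (P : AP) (A A' : carrier P) :
  annihilating A -> annihilating A' ->
  ap_joinable (restrict (predC1 A)) (restrict (predC1 A')).
Proof.
move=> annA annA'; case: (eqVneq A A') => [<- | neqAA'].
  exact/joinable_apiso/apiso_refl.
by apply: joinable_restrict; apply: annihilating_restrict_move; rewrite //= eq_sym.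
Qed.

Lemma joinable_M1M2 (P : AP) (A B C : carrier P) :
  annihilating A -> twins B C ->
  ap_joinable (restrict (predC1 A)) (restrict [pred x | (x != B) && (x != C)]).
Proof.
move=> annA twBC; have [neqBC _ _] := twBC.
case: (eqVneq A B) => [eqAB | neqAB].
  subst B; have annC := annihilating_twin annA twBC.
  have [|T m iso] := annihilating_restrict_move (k := predC1 A) _ annC.
    by apply/eqP => eqCA; apply: neqBC.
  exact: joinable_move_apiso m iso.
case: (eqVneq A C) => [eqAC | neqAC].
  subst C; have annB := annihilating_twin annA (twins_sym twBC).
  have [|T m iso] := annihilating_restrict_move (k := predC1 A) _ annB.
    by rewrite /= eq_sym.
  apply: joinable_move_apiso m (apiso_trans iso _).
  by apply: restrict_eq => x; exact: andbC.
apply: joinable_restrict; first by apply: twins_restrict_move; rewrite //= eq_sym.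
by apply: annihilating_restrict_move; rewrite //= neqAB.
Qed.

Lemma joinable_M2M2 (P : AP) (A B C D : carrier P) :
  twins A B -> twins C D ->
  ap_joinable (restrict [pred x | (x != A) && (x != B)])
              (restrict [pred x | (x != C) && (x != D)]).
Proof.
move=> twAB twCD.
case: (boolP [|| A == C, A == D, B == C | B == D]) => [overlap | ].
  exact/joinable_apiso/twins_overlap_apiso.
rewrite !negb_or => /and4P [neqAC neqAD neqBC neqBD].
by apply: joinable_restrict; apply: twins_restrict_move;
  rewrite /= ?(eq_sym C) ?(eq_sym D) ?neqAC ?neqAD ?neqBC ?neqBD.
Qed.

Lemma move_joinable (P Q1 Q2 : AP) :
  move P Q1 -> move P Q2 -> ap_joinable Q1 Q2.
Proof.
case=> [A annA | A B twAB] [A' annA' | C D twCD].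
- exact: joinable_M1M1.
- exact: joinable_M1M2.
- by apply: joinable_sym; [exact: apiso_sym | exact: joinable_M1M2].
- exact: joinable_M2M2.
Qed.

Lemma primitive_normal (P : AP) : primitive P <-> normal (@move alpha tau) P.
Proof.
split=> [[noann notw] Q | nP]; first by case=> [A /noann | A B /notw].
by split=> [A /move_M1 | A B /move_M2] /nP.
Qed.

Lemma homologous_closure (P Q : AP) :
  homologous P Q ->
  clos_refl_sym_trans AP (union AP (@apiso alpha tau) (@move alpha tau)) P Q.
Proof.
elim=> {P Q} [P Q iso | P Q m | P Q _ IH | P Q R _ IH1 _ IH2].
- by apply: rst_step; left.
- by apply: rst_step; right.
- exact: rst_sym.
- exact: rst_trans IH1 IH2.
Qed.

Lemma star_reduces (P Q : AP) : clos_refl_trans_1n AP (@move alpha tau) P Q -> reduces P Q.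
Proof. by elim=> [|{}P P' {}Q m _ IH]; [exact: red_refl | exact: red_step m IH]. Qed.

End AlphaPairings.

Theorem lemma7p1 (alpha : Type) (tau : alpha -> alpha) (htau : involutive tau) :
  (forall P : apairing tau, exists Q : apairing tau, reduces P Q /\ primitive Q) /\
  (forall P Q : apairing tau,
      primitive P -> primitive Q -> homologous P Q -> apiso P Q).
Proof.
split=> [P | P Q /primitive_normal nP /primitive_normal nQ /homologous_closure PQ].
  have [Q PQ nQ] := normal_exists (@card_move _ tau) P.
  by exists Q; split; [exact: star_reduces | exact/primitive_normal].
exact: (normal_unique_closure (@apiso_refl _ tau) (@apiso_sym _ tau) (@apiso_trans _ tau)
          (@move_apiso _ tau) (@card_move _ tau) (move_joinable htau) PQ
          rt1n_refl nP rt1n_refl nQ).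
Qed.
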